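(* Let $\beta=(1+\sqrt{13})/2$, the positive root of $x^2-x-3$, and define $F:[0,1+\beta)\to[0,1+\beta)$ by $F(x)=\beta x-y_j$ for $x\in I_j$, where $I_1=[0,1)$, $I_2=[1,1+1/\beta)$, $I_3=[1+1/\beta,1+2/\beta)$, $I_4=[1+2/\beta,\beta)$, $I_5=[\beta,1+\beta)$ and $y_1=0$, $y_2=0$, $y_3=1$, $y_4=2$, $y_5=3+\beta$. Then the orbit $\{F^n(\beta-1):n\ge0\}$ of $\beta-1$ under $F$ is infinite.
   Context: This $F$ is the generalized $\beta$-transformation associated with the one-dimensional substitution $l\to lsss$, $s\to l$ with tile lengths $|l|=\beta$, $|s|=1$; note $1+3/\beta=\beta$. *)

From Stdlib Require Import Reals List.
Open Scope R_scope.

Definition beta : R := (1 + sqrt 13) / 2.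

(* The generalized beta-transformation F on [0, 1+beta).
   Outside the domain [0,1+beta) F is set to the identity (irrelevant:
   the orbit of beta-1 stays in the domain). *)
Definition F (x : R) : R :=
  if Rlt_dec x 0 then x
  else if Rlt_dec x 1 then beta * x - 0
  else if Rlt_dec x (1 + 1 / beta) then beta * x - 0
  else if Rlt_dec x (1 + 2 / beta) then beta * x - 1
  else if Rlt_dec x beta then beta * x - 2
  else if Rlt_dec x (1 + beta) then beta * x - (3 + beta)
  else x.

Definition finite_set (S : R -> Prop) : Prop :=
  exists l : list R, forall x, S x -> In x l.

Definition orbit (f : R -> R) (x : R) : R -> Prop :=
  fun y => exists n : nat, y = Nat.iter n f x.

(* The orbit of beta - 1 lies in Z[beta]: after six steps it reaches 6 beta - 11, and
   each step acts on coordinates by x |-> beta x - y with y one of 0, 1, 2, 3 + beta.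
   Applying the Galois conjugation beta |-> 1 - beta, the conjugate orbit obeys
   x' |-> (1 - beta) x' - y' with |1 - beta| > 1.3 and |y'| <= 2, so once |x'| >= 7
   the conjugates strictly increase in absolute value.  Since coordinates in Z[beta]
   are unique (beta is irrational), the orbit points are pairwise distinct. *)

From Stdlib Require Import Reals List.
From Stdlib Require Import Lra Lia ZArith FinFun.
Open Scope R_scope.

Lemma beta_sq : beta * beta = beta + 3.
Proof.
  unfold beta. assert (H := sqrt_sqrt 13 ltac:(lra)). nra.
Qed.

Lemma beta_bounds : 2.3 < beta < 2.31.
Proof.
  unfold beta. assert (H := sqrt_sqrt 13 ltac:(lra)).
  assert (H0 := sqrt_pos 13). split; nra.
Qed.

Lemma inv_beta : / beta = (beta - 1) / 3.
Proof.
  assert (H := beta_sq). assert (H1 := beta_bounds).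
  apply (Rmult_eq_reg_l beta); [|lra]. field_simplify; lra.
Qed.

Definition val_at (r : R) (p : Z * Z) : R := IZR (fst p) + IZR (snd p) * r.

Definition times_root (p : Z * Z) : Z * Z := (3 * snd p, fst p + snd p)%Z.

Definition sub_coords (p q : Z * Z) : Z * Z := (fst p - fst q, snd p - snd q)%Z.

Lemma val_at_times_root_sub (r : R) (p q : Z * Z) : r * r = r + 3 ->
  val_at r (sub_coords (times_root p) q) = r * val_at r p - val_at r q.
Proof.
  intros Hr. unfold val_at, sub_coords, times_root; cbn [fst snd].
  rewrite !minus_IZR, plus_IZR, mult_IZR.
  replace (r * (IZR (fst p) + IZR (snd p) * r))
    with (IZR (fst p) * r + IZR (snd p) * (r * r)) by ring.
  rewrite Hr. simpl IZR. ring.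
Qed.

Lemma quadratic_form_anisotropic (p q : Z) : (p * p - p * q - 3 * q * q)%Z = 0%Z -> q = 0%Z.
Proof.
  remember (Z.abs_nat q) as n eqn:Hn. revert p q Hn.
  induction n as [n IH] using lt_wf_ind. intros p q Hn E.
  (* Modulo 2 the form is p^2 + pq + q^2, which vanishes only if p and q are even. *)
  destruct (Z.Even_or_Odd p) as [[p' ->]|[p' ->]];
    destruct (Z.Even_or_Odd q) as [[q' ->]|[q' ->]]; try lia.
  destruct (Z.eq_dec q' 0) as [->|Hq']; [reflexivity | exfalso].
  apply Hq', (IH (Z.abs_nat q') ltac:(lia) p'); nia.
Qed.

Lemma val_at_beta_inj : Injective (val_at beta).
Proof.
  intros [a b] [a' b']. unfold val_at; cbn [fst snd]. intros E.
  destruct (Z.eq_dec b b') as [<-|Hb].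
  - f_equal. apply eq_IZR. lra.
  - exfalso. apply Hb.
    assert (Eq : IZR (b - b') * beta = IZR (a' - a)) by (rewrite !minus_IZR; lra).
    enough ((b - b')%Z = 0%Z) by lia.
    apply (quadratic_form_anisotropic (a' - a)), eq_IZR.
    rewrite !minus_IZR, !mult_IZR, <- Eq.
    replace (IZR (b - b') * beta * (IZR (b - b') * beta) - IZR (b - b') * beta * IZR (b - b')
             - IZR 3 * IZR (b - b') * IZR (b - b'))
      with (IZR (b - b') * IZR (b - b') * (beta * beta - beta - 3)) by (simpl; ring).
    rewrite beta_sq. ring.
Qed.

Definition digit (x : R) : Z * Z :=
  if Rlt_dec x 1 then (0, 0)%Z
  else if Rlt_dec x (1 + 1 / beta) then (0, 0)%Z
  else if Rlt_dec x (1 + 2 / beta) then (1, 0)%Z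
  else if Rlt_dec x beta then (2, 0)%Z
  else (3, 1)%Z.

Lemma F_eq_digit (x : R) : 0 <= x < 1 + beta -> F x = beta * x - val_at beta (digit x).
Proof.
  intros Hx. unfold F, digit, val_at.
  repeat destruct Rlt_dec; simpl; lra.
Qed.

Lemma F_maps_domain (x : R) : 0 <= x < 1 + beta -> 0 <= F x < 1 + beta.
Proof.
  intros Hx. assert (H := beta_sq). assert (H1 := beta_bounds).
  unfold F, Rdiv. rewrite !Rmult_1_l, inv_beta.
  repeat destruct Rlt_dec; lra || nra.
Qed.

Lemma digit_conjugate_bound (x : R) : Rabs (val_at (1 - beta) (digit x)) <= 2.
Proof.
  assert (H1 := beta_bounds).
  unfold digit, val_at; repeat destruct Rlt_dec; simpl; apply Rabs_le; lra.
Qed.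

Definition step (p : Z * Z) : Z * Z :=
  sub_coords (times_root p) (digit (val_at beta p)).

Lemma val_step (p : Z * Z) : 0 <= val_at beta p < 1 + beta ->
  val_at beta (step p) = F (val_at beta p).
Proof.
  intros Hp. unfold step. rewrite val_at_times_root_sub by exact beta_sq.
  symmetry. apply F_eq_digit, Hp.
Qed.

Lemma conjugate_step_grows (p : Z * Z) : 7 <= Rabs (val_at (1 - beta) p) ->
  Rabs (val_at (1 - beta) p) < Rabs (val_at (1 - beta) (step p)).
Proof.
  intros Hp. assert (H1 := beta_bounds).
  assert (Hd := digit_conjugate_bound (val_at beta p)).
  unfold step. rewrite val_at_times_root_sub by (assert (H := beta_sq); nra).
  set (X := val_at (1 - beta) p) in *.
  set (D := val_at (1 - beta) (digit (val_at beta p))) in *.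
  (* |(1 - beta) X - D| >= (beta - 1) |X| - |D| > |X| because (beta - 2) * 7 > 2. *)
  assert (Hk : Rabs ((1 - beta) * X) = (beta - 1) * Rabs X)
    by (rewrite Rabs_mult, Rabs_left by lra; ring).
  assert (Ht := Rabs_triang_inv ((1 - beta) * X) D).
  nra.
Qed.

Definition orbit_coords (n : nat) : Z * Z := Nat.iter n step ((-11)%Z, 6%Z).

Lemma orbit_coords_S (n : nat) : orbit_coords (S n) = step (orbit_coords n).
Proof. reflexivity. Qed.

Lemma orbit_coords_spec (n : nat) :
  0 <= val_at beta (orbit_coords n) < 1 + beta /\
  val_at beta (orbit_coords n) = Nat.iter n F (6 * beta - 11) /\
  7 <= Rabs (val_at (1 - beta) (orbit_coords n)).
Proof.
  induction n as [|n [Hdom [Hval Hconj]]].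
  - assert (H1 := beta_bounds). unfold val_at; simpl.
    rewrite Rabs_left by lra. lra.
  - rewrite orbit_coords_S, val_step by exact Hdom.
    assert (Hgrow := conjugate_step_grows _ Hconj).
    split; [apply F_maps_domain, Hdom | split; [rewrite Hval; reflexivity | lra]].
Qed.

Lemma orbit_conjugate_increasing (n m : nat) : (n < m)%nat ->
  Rabs (val_at (1 - beta) (orbit_coords n)) < Rabs (val_at (1 - beta) (orbit_coords m)).
Proof.
  induction 1 as [|m _ IH]; rewrite orbit_coords_S;
    [| eapply Rlt_trans; [exact IH|]];
    apply conjugate_step_grows, orbit_coords_spec.
Qed.

Lemma orbit_coords_val_inj : Injective (fun n => val_at beta (orbit_coords n)).
Proof.
  intros n m E. apply val_at_beta_inj in E.
  destruct (Nat.lt_trichotomy n m) as [L|[L|L]]; [exfalso | exact L | exfalso];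
    apply orbit_conjugate_increasing in L; rewrite E in L; lra.
Qed.

Local Ltac F_eval :=
  unfold F, Rdiv; rewrite !Rmult_1_l, inv_beta; repeat destruct Rlt_dec; lra.

Lemma F_iter6_beta_sub1 : Nat.iter 6 F (beta - 1) = 6 * beta - 11.
Proof.
  assert (H := beta_sq). assert (H1 := beta_bounds).
  assert (E1 : F (beta - 1) = 3) by F_eval.
  assert (E2 : F 3 = 2 * beta - 3) by F_eval.
  assert (E3 : F (2 * beta - 3) = 5 - beta) by F_eval.
  assert (E4 : F (5 - beta) = 3 * beta - 6) by F_eval.
  assert (E5 : F (3 * beta - 6) = 9 - 3 * beta) by F_eval.
  assert (E6 : F (9 - 3 * beta) = 6 * beta - 11) by F_eval.
  simpl. rewrite E1, E2, E3, E4, E5, E6. reflexivity.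
Qed.

Lemma injective_seq_not_in_list {A : Type} (u : nat -> A) (l : list A) :
  Injective u -> ~ (forall n, In (u n) l).
Proof.
  intros Hu Hin.
  assert (Hnd : NoDup (map u (seq 0 (S (length l)))))
    by (apply Injective_map_NoDup; [exact Hu | apply seq_NoDup]).
  assert (Hincl : incl (map u (seq 0 (S (length l)))) l).
  { intros y Hy. apply in_map_iff in Hy as [k [<- _]]. apply Hin. }
  assert (Hlen := NoDup_incl_length Hnd Hincl).
  rewrite length_map, length_seq in Hlen. lia.
Qed.

Theorem mainTheorem6 : ~ finite_set (orbit F (beta - 1)).
Proof.
  intros [l Hl].
  apply (injective_seq_not_in_list _ l orbit_coords_val_inj).
  intros n. apply Hl. exists (n + 6)%nat.
  rewrite Nat.iter_add, F_iter6_beta_sub1.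
  apply orbit_coords_spec.
Qed.
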